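(* Consider the setting and algorithm described in the context. Let $\gamma>0$ and $K_0\ge0$ be such that for all $k\ge K_0$: $\gamma_k=\gamma$, $\delta_k=\delta:=2\nu+L_{\nabla h}+\frac{2\|A\|^2}{\gamma}$ and $\|z^{k+1}\|\le\min\left(\frac{\varepsilon}{\gamma},\sqrt{\frac{2\varepsilon}{\gamma}}\right)$. Let $c_1:=\nu$, $c_2:=\frac{\delta(2-\beta)}{2\beta}$, $c_3:=\frac{\gamma}{2}$. Then for all $k\ge K_0+1$: (i) $\Psi(x^{k+1},z^{k+1},u^{k+1},\delta,\gamma)+\theta_kf(Kx^k)-\theta_k\big(\langle Kx^{k+1},y^{k+1}\rangle-f^*(y^{k+1})\big)\le \Psi(x^k,z^k,u^k,\delta,\gamma)-c_1\|x^k-x^{k+1}\|^2-c_2\|u^k-u^{k+1}\|^2-c_3\|z^k-z^{k+1}\|^2$; (ii) $\Psi(x^{k+1},z^{k+1},u^{k+1},\delta,\gamma)-\theta_kf(Kx^{k+1})\le -c_1\|x^k-x^{k+1}\|^2-c_2\|u^k-u^{k+1}\|^2-c_3\|z^k-z^{k+1}\|^2$.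
   Context: Setting: $\mathcal{S}\subseteq\mathbb{R}^n$ nonempty, convex, compact; $A:\mathbb{R}^n\to\mathbb{R}^s$, $K:\mathbb{R}^n\to\mathbb{R}^p$ linear with adjoints $A^*,K^*$ and operator norm $\|A\|$; $g:\mathbb{R}^s\to\mathbb{R}\cup\{+\infty\}$ proper, convex, lsc; $h:\mathbb{R}^n\to\mathbb{R}$ differentiable on an open set containing $\mathcal{S}$ with $L_{\nabla h}$-Lipschitz gradient there; $f:\mathbb{R}^p\to\mathbb{R}\cup\{+\infty\}$ proper, convex, lsc with $K(\mathcal{S})\subseteq\operatorname{int}(\operatorname{dom}f)$ and $f(Kx)>0$ on $\mathcal{S}$; $\mathcal{S}\cap A^{-1}(\operatorname{dom}g)\ne\emptyset$, $\inf_{x\in\mathcal{S}}\{g(Ax)+h(x)\}>0$; $A(\mathcal{S})\subseteq\operatorname{dom}(\partial g)$ and there is $\ell>0$ with $\operatorname{dist}(0,\partial g(Ax))\le\ell$ for all $x\in\mathcal{S}$. Notation: $f^*,g^*$ Fenchel conjugates; $\iota_{\mathcal{S}}$ indicator; $\operatorname{Proj}_{\mathcal{S}}$ projection; $\operatorname{prox}_{\varphi,\kappa}(x)=\arg\min_y\{\varphi(y)+\frac1{2\kappa}\|y-x\|^2\}$; $\Psi(x,z,u,\delta,\gamma):=\langle z,Ax\rangle-g^*(z)+h(x)+\iota_{\mathcal{S}}(x)+\frac{\delta}{2}\|x-u\|^2-\frac{\gamma}{2}\|z\|^2$. Algorithm: given $0<\beta<2$, $\nu>0$, $0<q<1$,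 $\delta_0,\theta_0>0$, $\gamma_0=1$, $\varepsilon>0$ and $(x^0,z^0,u^0)$, for $k\ge0$: choose $y^{k+1}\in\partial f(Kx^k)$; $x^{k+1}:=\operatorname{Proj}_{\mathcal{S}}(u^k+\frac{\theta_k}{\delta_k}K^*y^{k+1}-\frac1{\delta_k}\nabla h(x^k)-\frac1{\delta_k}A^*z^k)$; $u^{k+1}:=(1-\beta)u^k+\beta x^{k+1}$; take the smallest $j_k\ge0$ such that with $\gamma_{k,j_k}:=\gamma_kq^{j_k}$, $z^{k+1,j_k}:=\operatorname{prox}_{g^*,1/\gamma_{k,j_k}}(Ax^{k+1}/\gamma_{k,j_k})$ one has $\theta_{k+1}:=\Psi(x^{k+1},z^{k+1,j_k},u^{k+1},\delta_k,\gamma_{k,j_k})/f(Kx^{k+1})>0$; set $\gamma_{k+1}:=\gamma_{k,j_k}$, $\delta_{k+1}:=2\nu+L_{\nabla h}+2\|A\|^2/\gamma_{k+1}$, $z^{k+1}:=z^{k+1,j_k}$; if $\|z^{k+1}\|>\min(\varepsilon/\gamma_{k+1},\sqrt{2\varepsilon/\gamma_{k+1}})$, replace $\gamma_{k+1}$ by $\gamma_{k+1}q$ and recompute $\delta_{k+1}$ by the same formula. *)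

(* R : realType, vectors of R^n are row vectors 'rV[R]_n,
   linear maps R^n -> R^s are matrices A : 'M[R]_(n,s) acting by x |-> x *m A,
   with adjoint z |-> z *m A^T. *)
From HB Require Import structures.
From mathcomp Require Import all_boot all_order all_algebra.
From mathcomp Require Import all_classical all_reals all_analysis.
Set Implicit Arguments. Unset Strict Implicit. Unset Printing Implicit Defensive.
Import Order.TTheory GRing.Theory Num.Theory.
Import numFieldNormedType.Exports.
Local Open Scope classical_set_scope.
Local Open Scope ring_scope.

Section Defs.
Variable R : realType.

Definition dot {n} (u v : 'rV[R]_n) : R := \sum_(i < n) u ord0 i * v ord0 i.
Definition enorm {n} (u : 'rV[R]_n) : R := Num.sqrt (dot u u).

Definition opnorm {n s} (A : 'M[R]_(n, s)) : R :=
  sup [set enorm (x *m A) | x in [set x : 'rV[R]_n | enorm x <= 1]].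

Local Open Scope ereal_scope.

Definition dom {n} (f : 'rV[R]_n -> \bar R) : set 'rV[R]_n := [set x | f x < +oo].

Definition proper_fun {n} (f : 'rV[R]_n -> \bar R) : Prop :=
  (exists x, f x \is a fin_num) /\ (forall x, f x != -oo).

Definition convex_fun {n} (f : 'rV[R]_n -> \bar R) : Prop :=
  forall x y (t : R), (0 < t < 1)%R ->
    f (t *: x + (1 - t) *: y)%R <= t%:E * f x + (1 - t)%:E * f y.

Definition fconj {n} (f : 'rV[R]_n -> \bar R) (y : 'rV[R]_n) : \bar R :=
  ereal_sup [set (dot x y)%:E - f x | x in [set: 'rV[R]_n]].

Definition subdiff {n} (f : 'rV[R]_n -> \bar R) (x w : 'rV[R]_n) : Prop :=
  f x \is a fin_num /\ forall v, f x + (dot w (v - x)%R)%:E <= f v.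

Definition dist0 {n} (C : set 'rV[R]_n) : R := inf [set enorm w | w in C].

Definition indic {n} (S : set 'rV[R]_n) (x : 'rV[R]_n) : \bar R :=
  if `[< S x >] then 0 else +oo.

(* Euclidean projection onto S (chosen by global choice; unique for nonempty
   closed convex S) *)
Definition Proj {n} (S : set 'rV[R]_n) (x : 'rV[R]_n) : 'rV[R]_n :=
  xget (0%R : 'rV[R]_n) [set p | S p /\ forall w, S w -> (enorm (p - x) <= enorm (w - x))%R].

Definition prox {n} (phi : 'rV[R]_n -> \bar R) (kappa : R) (x : 'rV[R]_n)
  : 'rV[R]_n :=
  xget (0%R : 'rV[R]_n) [set p | forall w, phi p + ((2 * kappa)^-1 * enorm (p - x) ^+ 2)%R%:E
                          <= phi w + ((2 * kappa)^-1 * enorm (w - x) ^+ 2)%R%:E].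

Definition Psi {n s} (A : 'M[R]_(n, s)) (gstar : 'rV[R]_s -> \bar R)
  (h : 'rV[R]_n -> R) (S : set 'rV[R]_n)
  (x : 'rV[R]_n) (z : 'rV[R]_s) (u : 'rV[R]_n) (delta gamma : R) : \bar R :=
  (dot z (x *m A))%:E - gstar z + (h x)%:E + indic S x
  + (delta / 2 * enorm (x - u) ^+ 2)%R%:E - (gamma / 2 * enorm z ^+ 2)%R%:E.

Definition alg_run {n s p} (S : set 'rV[R]_n) (A : 'M[R]_(n, s)) (K : 'M[R]_(n, p))
  (g : 'rV[R]_s -> \bar R) (h : 'rV[R]_n -> R) (gradh : 'rV[R]_n -> 'rV[R]_n)
  (L : R) (f : 'rV[R]_p -> \bar R)
  (beta nu q delta0 theta0 eps : R)
  (x u : nat -> 'rV[R]_n) (z : nat -> 'rV[R]_s) (y : nat -> 'rV[R]_p)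
  (gam del th : nat -> R) : Prop :=
  [/\ gam 0%N = 1%R, del 0%N = delta0, th 0%N = theta0 &
   forall k : nat,
   let gk i := (gam k * q ^+ i)%R in
   let zc i := prox (fconj g) (gk i)^-1 ((gk i)^-1 *: (x k.+1 *m A)) in
   let thc i := (fine (Psi A (fconj g) h S (x k.+1) (zc i) (u k.+1) (del k) (gk i))
                 / fine (f (x k.+1 *m K)))%R in
   [/\ subdiff f (x k *m K) (y k.+1),
       x k.+1 = Proj S (u k + (th k / del k) *: (y k.+1 *m K^T)
                        - (del k)^-1 *: gradh (x k) - (del k)^-1 *: (z k *m A^T))%R,
       u k.+1 = ((1 - beta) *: u k + beta *: x k.+1)%R &
       exists j : nat,
       [/\ (forall i, (i < j)%N -> ~ (0 < thc i)%R), (0 < thc j)%R,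
           z k.+1 = zc j /\ th k.+1 = thc j,
           gam k.+1 = (if (Num.min (eps / gk j) (Num.sqrt (2 * eps / gk j))
                             < enorm (z k.+1))%R
                       then gk j * q else gk j)%R
         & del k.+1 = (2 * nu + L + 2 * opnorm A ^+ 2 / gam k.+1)%R]]].

End Defs.

From Pilot Require Import Defs.
From HB Require Import structures.
From mathcomp Require Import all_boot all_order all_algebra.
From mathcomp Require Import all_classical all_reals all_analysis.
From mathcomp Require Import lra ring.
Import Order.TTheory GRing.Theory Num.Theory.
Import numFieldNormedType.Exports.
Set Implicit Arguments. Unset Strict Implicit. Unset Printing Implicit Defensive.
Local Open Scope classical_set_scope.
Local Open Scope ring_scope.

(* Each block of the iteration decreases its own part of Psi.  The x-update
   projects u^k - (grad h(x^k) + A^T z^k - theta_k K^T y^(k+1)) / delta onto S: the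
   three-point inequality of the projection, the descent lemma for h and the bound
   ||A (x^(k+1) - x^k)|| <= ||A|| ||x^(k+1) - x^k|| leave nu ||x^k - x^(k+1)||^2, which
   is how delta is chosen.  The relaxation step trades ||x^(k+1) - u^k||^2 for
   ||x^(k+1) - u^(k+1)||^2 plus the c2-term.  The z-update maximises the
   gamma-strongly concave map z |-> <z, A x> - g*(z) - gamma/2 ||z||^2; the
   three-point inequality of this prox at x^k and at x^(k+1) bounds the change of
   that part of Psi by a Young term, paid for by delta, minus gamma/2 ||z^k - z^(k+1)||^2.
   Once gamma_k is constant the backtracking accepts j = 0, so z^k is this prox point
   and theta_k = Psi_k / f(K x^k).  Then (i) is the Fenchel-Young equality
   f*(y) = <K x^k, y> - f(K x^k) at the subgradient y = y^(k+1), and (ii) follows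
   from Psi_k = theta_k f(K x^k) and the subgradient inequality at K x^(k+1). *)

Section InnerProduct.
Variables (R : realType) (m : nat).
Implicit Types (u v w : 'rV[R]_m) (a t : R).

Lemma dotC u v : dot u v = dot v u.
Proof. by apply: eq_bigr => i _; rewrite mulrC. Qed.

Lemma dotDl u v w : dot (u + v) w = dot u w + dot v w.
Proof. by rewrite /dot -big_split; apply: eq_bigr => i _; rewrite mxE mulrDl. Qed.

Lemma dotZl a u w : dot (a *: u) w = a * dot u w.
Proof. by rewrite /dot mulr_sumr; apply: eq_bigr => i _; rewrite mxE mulrA. Qed.

Lemma dotNl u w : dot (- u) w = - dot u w.
Proof. by rewrite -scaleN1r dotZl mulN1r. Qed.

Lemma dotBl u v w : dot (u - v) w = dot u w - dot v w.
Proof. by rewrite dotDl dotNl. Qed.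

Lemma dotDr u v w : dot w (u + v) = dot w u + dot w v.
Proof. by rewrite dotC dotDl !(dotC w). Qed.

Lemma dotZr a u w : dot w (a *: u) = a * dot w u.
Proof. by rewrite dotC dotZl dotC. Qed.

Lemma dotNr u w : dot w (- u) = - dot w u.
Proof. by rewrite dotC dotNl dotC. Qed.

Lemma dotBr u v w : dot w (u - v) = dot w u - dot w v.
Proof. by rewrite dotDr dotNr. Qed.

Lemma dot0l w : dot 0 w = 0.
Proof. by rewrite -(scale0r 0) dotZl mul0r. Qed.

Lemma dot_subC u v : dot (u - v) (u - v) = dot (v - u) (v - u).
Proof. by rewrite -opprB dotNl dotNr opprK. Qed.

Lemma dot_addZ u v t :
  dot (u + t *: v) (u + t *: v) = dot u u + 2 * t * dot u v + t ^+ 2 * dot v v.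
Proof. by rewrite !dotDl !dotDr !dotZl !dotZr (dotC v u); ring. Qed.

Lemma sqr_coord_le_dot u i : u ord0 i ^+ 2 <= dot u u.
Proof.
rewrite /dot (bigD1 i) //= -expr2 lerDl sumr_ge0 // => j _.
by rewrite -expr2 sqr_ge0.
Qed.

Lemma dotxx_ge0 u : 0 <= dot u u.
Proof. by rewrite /dot sumr_ge0 // => i _; rewrite -expr2 sqr_ge0. Qed.

Lemma sqr_enorm u : enorm u ^+ 2 = dot u u.
Proof. by rewrite sqr_sqrtr // dotxx_ge0. Qed.

Lemma enorm_ge0 u : 0 <= enorm u.
Proof. exact: sqrtr_ge0. Qed.

Lemma enormZ a u : enorm (a *: u) = `|a| * enorm u.
Proof. by rewrite /enorm dotZl dotZr mulrA -expr2 sqrtrM ?sqr_ge0 // sqrtr_sqr. Qed.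

Lemma enorm_eq0 u : enorm u = 0 -> u = 0.
Proof.
move=> u0; apply/rowP => i; rewrite mxE; apply/eqP; rewrite -sqrf_eq0 eq_le sqr_ge0 andbT.
by have := sqr_coord_le_dot u i; rewrite -sqr_enorm u0 expr0n.
Qed.

Lemma dot_mulmx k (z : 'rV[R]_k) u (A : 'M[R]_(m, k)) : dot z (u *m A) = dot (z *m A^T) u.
Proof.
rewrite /dot; under eq_bigr do rewrite mxE mulr_sumr.
rewrite exchange_big /=; apply: eq_bigr => i _.
by rewrite mxE mulr_suml; apply: eq_bigr => j _; rewrite mxE; ring.
Qed.

Lemma dot_sqr_le u v : dot u v ^+ 2 <= dot u u * dot v v.
Proof.
have quad_ge0 t : 0 <= dot u u * t ^+ 2 - 2 * dot u v * t + dot v v.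
  by have := dotxx_ge0 (v + (- t) *: u); rewrite dot_addZ (dotC v u) sqrrN; lra.
have [uu0|uu_neq0] := eqVneq (dot u u) 0.
  have [->|uv_neq0] := eqVneq (dot u v) 0; first by rewrite expr0n /= uu0 mul0r.
  have := quad_ge0 ((dot v v + 1) / (2 * dot u v)).
  have -> : 2 * dot u v * ((dot v v + 1) / (2 * dot u v)) = dot v v + 1 by field.
  by rewrite uu0 mul0r add0r; lra.
have uu_gt0 : 0 < dot u u by rewrite lt_def uu_neq0 dotxx_ge0.
have := quad_ge0 (dot u v / dot u u).
have -> : dot u u * (dot u v / dot u u) ^+ 2 - 2 * dot u v * (dot u v / dot u u) + dot v v
    = (dot u u * dot v v - dot u v ^+ 2) / dot u u by field.
by rewrite pmulr_lge0 ?invr_gt0 // subr_ge0.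
Qed.

Lemma dot_le_enorm u v : dot u v <= enorm u * enorm v.
Proof.
rewrite -sqrtrM ?dotxx_ge0 // (le_trans (ler_norm _)) // -sqrtr_sqr.
by rewrite ler_sqrt ?mulr_ge0 ?dotxx_ge0 // dot_sqr_le.
Qed.

Lemma dot_le_young u v t : 0 < t -> dot u v <= t / 2 * dot u u + (2 * t)^-1 * dot v v.
Proof.
move=> t_gt0; have := dotxx_ge0 (t *: u - v).
rewrite !dotBl !dotBr !dotZl !dotZr (dotC v u) => sq_ge0; rewrite -subr_ge0.
have -> : t / 2 * dot u u + (2 * t)^-1 * dot v v - dot u v =
    (2 * t)^-1 * (t * (t * dot u u) - t * dot u v - (t * dot u v - dot v v)).
  by field; rewrite gt_eqF.
by rewrite mulr_ge0 // invr_ge0 mulr_ge0 // ltW.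
Qed.

Lemma continuous_dot (T : topologicalType) (f g : T -> 'rV[R]_m) :
  continuous f -> continuous g -> continuous (fun x => dot (f x) (g x)).
Proof.
move=> f_cont g_cont.
have coord_cont (k : T -> 'rV[R]_m) i : continuous k -> continuous (fun x => k x ord0 i).
  by move=> k_cont x; exact: (continuous_comp (k_cont x) (@coord_continuous R 1 m ord0 i _)).
rewrite /dot -fct_sumE; apply: (big_ind (fun F : T -> R => continuous F)).
- by move=> x; exact: cst_continuous.
- by move=> F G F_cont G_cont x; exact: (continuousD (F_cont x) (G_cont x)).
- by move=> i _ x; apply: continuousM; apply: coord_cont.
Qed.

End InnerProduct.


Lemma le_of_forall_le_addt (R : realFieldType) (a b k : R) :
  (forall t, 0 < t < 1 -> a <= b + t * k) -> a <= b.
Proof.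
move=> le_addt; apply/ler_addgt0Pr => e e_gt0.
have d_gt0 : 0 < 2 * e + `|k| by have := normr_ge0 k; lra.
set t := e / (2 * e + `|k|).
have t_gt0 : 0 < t by rewrite divr_gt0.
have t_lt1 : t < 1 by rewrite ltr_pdivrMr // mul1r; have := normr_ge0 k; lra.
have tk_le : t * k <= e.
  rewrite (le_trans (ler_wpM2l (ltW t_gt0) (ler_norm k))) // /t mulrAC ler_pdivrMr //.
  by have := normr_ge0 k; nra.
by apply: le_trans (le_addt t _) _; [rewrite t_gt0 t_lt1 | lra].
Qed.

Lemma lte_dense_EFin (R : realFieldType) (a b : \bar R) :
  (a < b)%E -> exists r : R, (a < r%:E < b)%E.
Proof.
case: a => [x||]; case: b => [y||] //= ab.
- by exists ((x + y) / 2); rewrite !lte_fin in ab *; apply/andP; split; lra.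
- by exists (x + 1); rewrite lte_fin ltry andbT ltrDl.
- by exists (y - 1); rewrite lte_fin ltNyr /= gtrDl oppr_lt0.
- by exists 0; rewrite ltNyr ltry.
Qed.

Section Minimizers.
Variable R : realType.

(* First-order optimality along the segment [z, w], then t -> 0. *)
Lemma min_quad_three_point m (C : set 'rV[R]_m) (G : 'rV[R]_m -> \bar R) (gam a b : R)
    (c z w : 'rV[R]_m) :
  0 < gam -> G z = a%:E -> G w = b%:E ->
  (forall t, 0 < t < 1 -> C (t *: w + (1 - t) *: z) /\
     (G (t *: w + (1 - t) *: z)%R <= (t * b + (1 - t) * a)%R%:E)%E) ->
  (forall v, C v -> (G z + (gam / 2 * dot (z - c) (z - c))%R%:E
                     <= G v + (gam / 2 * dot (v - c) (v - c))%R%:E)%E) ->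
  a + gam / 2 * dot (z - c) (z - c) + gam / 2 * dot (w - z) (w - z)
    <= b + gam / 2 * dot (w - c) (w - c).
Proof.
move=> gam_gt0 Gz Gw segment zmin.
set e := z - c; set d := w - z.
have first_order : a <= b + gam * dot e d.
  apply: (le_of_forall_le_addt (k := gam / 2 * dot d d)) => t t01.
  have [Ct Gt] := segment t t01.
  have := zmin _ Ct.
  have -> : t *: w + (1 - t) *: z - c = e + t *: d.
    by apply/rowP => i; rewrite !mxE; ring.
  rewrite Gz dot_addZ => /le_trans/(_ (leeD2r _ Gt)); rewrite -!EFinD lee_fin.
  by case/andP: t01 => t_gt0 _; nra.
have -> : w - c = e + 1 *: d by apply/rowP => i; rewrite !mxE; ring.
by rewrite dot_addZ; nra.
Qed.

(* The strict sublevel sets of F above its infimum on C generate a proper filter on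
   the compact C; by lower semicontinuity a cluster point of it is a minimiser. *)
Lemma lsc_compact_min (T : topologicalType) (C : set T) (F : T -> \bar R) :
  compact C -> C !=set0 -> lower_semicontinuous F ->
  exists2 z, C z & forall v, C v -> (F z <= F v)%E.
Proof.
move=> C_compact [z0 Cz0] F_lsc.
set m := ereal_inf (F @` C).
suff [z Cz Fz_le] : exists2 z, C z & (F z <= m)%E.
  by exists z => // v Cv; apply: le_trans Fz_le (ereal_inf_lbound _); exists v.
have [m_pinfty|m_fin] := eqVneq m +oo%E.
  by exists z0 => //; rewrite m_pinfty leey.
pose D := [set r : R | (m < r%:E)%E].
pose B r := C `&` [set v | (F v < r%:E)%E].
have [r0 Dr0] : exists r, D r.
  have [r /andP[mr _]] : exists r : R, (m < r%:E < +oo)%E.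
    by apply: lte_dense_EFin; rewrite ltey.
  by exists r.
have B_filter : ProperFilter (filter_from D B).
  apply: filter_from_proper => [|r Dr]; last first.
    by have [_ [v Cv <-] Fv] := ereal_inf_lt Dr; exists v.
  apply: filter_from_filter; first by exists r0.
  move=> i j Di Dj; exists (Order.min i j); first by rewrite /D /= EFin_min lt_min Di Dj.
  by move=> v [Cv]; rewrite /= EFin_min lt_min => /andP[Fi Fj].
have [z [Cz z_clust]] := C_compact _ B_filter (ex_intro2 _ _ r0 Dr0 (@subIsetl _ _ _)).
exists z => //; rewrite leNgt; apply/negP => mz.
have [r /andP[mr rz]] := lte_dense_EFin mz.
have [V Vz rV] := F_lsc z r rz.
have [v [[_ Fvr] Vv]] := z_clust (B r) V (ex_intro2 _ _ r mr (@subset_refl _ _)) Vz.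
by have := lt_trans (rV v Vv) Fvr; rewrite ltxx.
Qed.

End Minimizers.

Section Projection.
Variables (R : realType) (m : nat) (S : set 'rV[R]_m).
Hypotheses (S_neq0 : S !=set0) (S_compact : compact S) (S_convex : convex.convex_set S).

Lemma convex_set_segment w z (t : R) :
  S w -> S z -> 0 <= t <= 1 -> S (t *: w + (1 - t) *: z).
Proof.
move=> Sw Sz /andP[t_ge0 t_le1].
by have := S_convex (Itv01 t_ge0 t_le1) (mem_set Sw) (mem_set Sz); rewrite inE.
Qed.

Lemma ProjP v : S (Proj S v) /\ forall w, S w -> enorm (Proj S v - v) <= enorm (w - v).
Proof.
have dist_cont : continuous (fun w : 'rV[R]_m => dot (w - v) (w - v)).
  by apply: continuous_dot => w; apply: continuousB => //; exact: cst_continuous.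
have [p /set_mem Sp p_min] := compact_EVT_min S_neq0 S_compact
  (continuous_subspaceT dist_cont).
have nearest : exists p, S p /\ forall w, S w -> enorm (p - v) <= enorm (w - v).
  by exists p; split => // w Sw; rewrite ler_sqrt ?dotxx_ge0 // p_min // inE.
exact: (xgetPex 0 nearest).
Qed.

Lemma proj_three_point v : S (Proj S v) /\ forall w, S w ->
  dot (Proj S v - v) (Proj S v - v) + dot (w - Proj S v) (w - Proj S v)
    <= dot (w - v) (w - v).
Proof.
have [SP P_min] := ProjP v; split => // w Sw.
have := @min_quad_three_point R m S (fun=> 0%E) 2 0 0 v (Proj S v) w.
rewrite divff // !mul1r !add0r; apply => //.
  move=> t /andP[t_gt0 t_lt1]; split; last by rewrite !mulr0 addr0.
  by apply: convex_set_segment => //; rewrite !ltW.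
move=> w' Sw'; rewrite !add0e lee_fin !mul1r -!sqr_enorm.
by rewrite ler_sqr ?nnegrE ?enorm_ge0 ?P_min.
Qed.

End Projection.

Section FenchelConjugate.
Variables (R : realType) (m : nat) (g : 'rV[R]_m -> \bar R).
Local Open Scope ereal_scope.

Lemma fenchel_young x w : (dot x w)%:E - g x <= fconj g w.
Proof. by apply: ereal_sup_ubound; exists x. Qed.

Lemma fconj_convex_comb (w z : 'rV[R]_m) (a b t : R) :
  (forall x, g x != -oo) -> fconj g w = b%:E -> fconj g z = a%:E -> (0 <= t <= 1)%R ->
  fconj g (t *: w + (1 - t) *: z)%R <= (t * b + (1 - t) * a)%:E.
Proof.
move=> gNy gw gz /andP[t_ge0 t_le1].
apply: ge_ereal_sup => _ [x _ <-].
have := fenchel_young x w; have := fenchel_young x z; rewrite gw gz.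
move: (gNy x); case: (g x) => [gx _| _ _ _|//]; last by rewrite leNye.
rewrite !lee_fin dotDr !dotZr => le_a le_b.
have := mulr_ge0 t_ge0 (_ : 0 <= b - (dot x w - gx))%R.
have := mulr_ge0 (_ : 0 <= 1 - t)%R (_ : 0 <= a - (dot x z - gx))%R.
by rewrite !subr_ge0 => /(_ t_le1 le_a) ? /(_ le_b) ?; lra.
Qed.

Lemma fconj_subdiff x y : (forall v, g v != -oo) -> subdiff g x y ->
  fconj g y = (dot x y)%:E - g x.
Proof.
move=> gNy [gx_fin gx_le]; apply/eqP; rewrite eq_le fenchel_young andbT.
apply: ge_ereal_sup => _ [v _ <-].
have := gx_le v; move: (gNy v) gx_fin; case: (g v) => [gv _| _ _ _ |//]; last by rewrite leNye.
case: (g x) => [gx _|//|//]; rewrite -EFinD -EFinB !lee_fin dotBr (dotC x y) (dotC v y).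
by lra.
Qed.

End FenchelConjugate.

Section Prox.
Variables (R : realType) (m : nat).
Implicit Types (a c v w : 'rV[R]_m).

Lemma affine_quad_sublevel_bounded a c (b gam V : R) : 0 < gam ->
  exists M, forall v, dot a v + b + gam / 2 * dot (v - c) (v - c) <= V ->
    forall i, `|v ord0 i - c ord0 i| <= M.
Proof.
move=> gam_gt0; set B := V - b - dot a c + gam^-1 * dot a a.
exists (`|4 * B / gam| + 1) => v le_V i.
set dd := dot (v - c) (v - c) in le_V.
have := dot_le_young (v - c) (- a) (_ : 0 < gam / 2); rewrite divr_gt0 // => /(_ isT).
have -> : (2 * (gam / 2))^-1 = gam^-1 by congr (_^-1); field.
rewrite dotNr dotNl dotNr opprK (dotC (v - c)) dotBr -/dd => young.
have dd_le : dd <= 4 * B / gam by rewrite ler_pdivlMr // /B; lra.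
have := sqr_coord_le_dot (v - c) i; rewrite -/dd !mxE => coord_le.
set y := v ord0 i - c ord0 i in coord_le *.
have norm_le : `|y| <= y ^+ 2 + 1.
  by rewrite -real_normK ?num_real //; have := normr_ge0 y; nra.
by have := ler_norm (4 * B / gam); lra.
Qed.

Variable g : 'rV[R]_m -> \bar R.
Hypothesis g_proper : proper_fun g.

(* [fconj g] is a supremum of continuous affine functions. *)
Lemma fconj_addr_lsc (phi : 'rV[R]_m -> R) : continuous phi ->
  lower_semicontinuous (fun w => fconj g w + (phi w)%:E)%E.
Proof.
move=> phi_cont w r.
rewrite -lteBlDr // -EFinB => /ereal_sup_gt[_ [x _ <-]].
move: (g_proper.2 x) (fenchel_young g x); case: (g x) => [gx _ young|//|//].
rewrite -EFinB lte_fin => r_lt.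
pose U := [set v | r + gx < dot x v + phi v].
have U_nbhs : nbhs w U.
  have aff_cont : continuous (fun v => dot x v + phi v).
    move=> v; apply: continuousD (phi_cont v).
    by apply: continuous_dot => t; [exact: cst_continuous | exact: cvg_id].
  apply: (aff_cont w [set y | r + gx < y]); apply: open_nbhs_nbhs; split.
    exact: open_gt.
  by rewrite /= -ltrBrDr addrAC -ltrBlDr.
exists U => // v Uv; rewrite (lt_le_trans _ (leeD2r _ (young v))) // -EFinD lte_fin.
by move: Uv; rewrite /U /=; lra.
Qed.

Lemma fconj_quad_min c (gam : R) : 0 < gam -> (exists w0, fconj g w0 \is a fin_num) ->
  exists p, forall w, (fconj g p + (gam / 2 * dot (p - c) (p - c))%:E
                       <= fconj g w + (gam / 2 * dot (w - c) (w - c))%:E)%E.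
Proof.
move=> gam_gt0 [w0 /EFin_fin_numP[V0 fw0]].
have [[x0 /EFin_fin_numP[g0 gx0]] _] := g_proper.
pose F w := (fconj g w + (gam / 2 * dot (w - c) (w - c))%:E)%E.
pose V := V0 + gam / 2 * dot (w0 - c) (w0 - c).
have [M box] := affine_quad_sublevel_bounded x0 c (- g0) V gam_gt0.
pose C := [set v : 'rV[R]_m | forall i, `[c ord0 i - M, c ord0 i + M]%classic (v ord0 i)].
have sublevel_C v : (F v <= V%:E)%E -> C v.
  move=> Fv_le i; rewrite /= in_itv /= -ler_distl; apply: box => {i}.
  rewrite -lee_fin; apply: le_trans Fv_le; rewrite /F EFinD.
  by apply: leeD2r; have := fenchel_young g x0 v; rewrite gx0 EFinD.
have Fw0 : F w0 = V%:E by rewrite /F fw0.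
have Cw0 : C w0 by apply: sublevel_C; rewrite Fw0.
have C_compact : compact C.
  apply: (rV_compact (A := fun i => `[c ord0 i - M, c ord0 i + M]%classic)) => i.
  exact: segment_compact.
have F_lsc : lower_semicontinuous F.
  apply: fconj_addr_lsc => v.
  apply: (@continuousM _ _ (cst (gam / 2)) (fun w => dot (w - c) (w - c))).
    exact: cst_continuous.
  by apply: continuous_dot => t; apply: continuousB => //; exact: cst_continuous.
have [z Cz z_min] := lsc_compact_min C_compact (ex_intro _ w0 Cw0) F_lsc.
exists z => w; have [Cw|notCw] := pselect (C w); first exact: z_min.
apply: le_trans (z_min _ Cw0) _; rewrite Fw0 leNgt; apply/negP => /ltW /sublevel_C.
exact: notCw.
Qed.

Lemma prox_fconj_min c (gam : R) : 0 < gam -> (exists w0, fconj g w0 \is a fin_num) ->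
  let z := prox (fconj g) gam^-1 c in
  forall w, (fconj g z + (gam / 2 * dot (z - c) (z - c))%:E
             <= fconj g w + (gam / 2 * dot (w - c) (w - c))%:E)%E.
Proof.
move=> gam_gt0 /(fconj_quad_min c gam_gt0)[p p_min] z.
have half : (2 * gam^-1)^-1 = gam / 2 by rewrite invfM invrK mulrC.
have p_prox : exists p, forall w,
    (fconj g p + ((2 * gam^-1)^-1 * enorm (p - c) ^+ 2)%:E
     <= fconj g w + ((2 * gam^-1)^-1 * enorm (w - c) ^+ 2)%:E)%E.
  by exists p => w; rewrite half !sqr_enorm.
by move=> w; rewrite -half -!sqr_enorm; exact: (xgetPex 0 p_prox w).
Qed.

Lemma prox_fconj_three_point c w (gam a b : R) : 0 < gam ->
  let z := prox (fconj g) gam^-1 c in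
  fconj g z = a%:E -> fconj g w = b%:E ->
  a + gam / 2 * dot (z - c) (z - c) + gam / 2 * dot (w - z) (w - z)
    <= b + gam / 2 * dot (w - c) (w - c).
Proof.
move=> gam_gt0 z gz gw.
have := @min_quad_three_point _ _ setT (fconj g) gam a b c z w gam_gt0 gz gw.
apply=> [t /andP[t_gt0 t_lt1]|v _].
  split => //; apply: fconj_convex_comb => //; first exact: g_proper.2.
  by rewrite !ltW.
by apply: (@prox_fconj_min c gam) => //; exists z; rewrite gz.
Qed.

End Prox.

Section Smooth.
Variables (R : realType) (m : nat).

Lemma is_derive_line (h : 'rV[R]_m -> R) (x d : 'rV[R]_m) (t : R) :
  differentiable h (x + t *: d) ->
  is_derive t 1 (fun s => h (x + s *: d)) ('D_d h (x + t *: d)).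
Proof.
move=> h_diff.
have quotE : (fun s : R => s^-1 *: (((fun s => h (x + s *: d)) \o shift t) (s *: 1)
                                     - h (x + t *: d))) =
             (fun s : R => s^-1 *: ((h \o shift (x + t *: d)) (s *: d) - h (x + t *: d))).
  apply/funext => s /=; congr (_ *: (_ - _)); congr h.
  by rewrite -[s%:A]/(s * 1) mulr1 scalerDl addrCA.
apply: DeriveDef; last by rewrite /derive quotE.
by move: (@diff_derivable _ _ _ h _ d h_diff); rewrite /derivable quotE.
Qed.

Variables (U : set 'rV[R]_m) (h : 'rV[R]_m -> R) (gradh : 'rV[R]_m -> 'rV[R]_m) (L : R).
Hypothesis h_diff : forall x, U x ->
  differentiable h x /\ forall v, 'D_v h x = dot (gradh x) v.
Hypothesis gradh_lip : forall x w, U x -> U w ->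
  enorm (gradh x - gradh w) <= L * enorm (x - w).

Lemma dot_grad_sub_le x d (t : R) : U x -> U (x + t *: d) -> 0 <= t ->
  dot (gradh (x + t *: d) - gradh x) d <= L * t * dot d d.
Proof.
move=> Ux Uxtd t_ge0; have := gradh_lip Uxtd Ux.
rewrite addrAC subrr add0r enormZ (ger0_norm t_ge0) => /(ler_wpM2r (enorm_ge0 d)).
by have := dot_le_enorm (gradh (x + t *: d) - gradh x) d; rewrite -sqr_enorm; lra.
Qed.

Lemma descent_lemma x y : (forall t, 0 <= t <= 1 -> U (x + t *: (y - x))) ->
  h y <= h x + dot (gradh x) (y - x) + L / 2 * dot (y - x) (y - x).
Proof.
move=> segment; set d := y - x in segment *.
have Ux : U x by have := segment 0; rewrite scale0r addr0; apply; rewrite lexx ler01.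
pose a := dot (gradh x) d; pose c := L / 2 * dot d d.
pose phi := (fun t => h (x + t *: d)) - a *: (@id R) - c *: ((@id R) * (@id R)).
have phi_derive (t : R) : 0 <= t <= 1 -> is_derive t 1 phi
    (dot (gradh (x + t *: d)) d - a *: 1 - c *: (t *: 1 + t *: 1)).
  move=> t01; have [diff D_grad] := h_diff (segment t t01); rewrite -D_grad.
  exact: (is_deriveB (is_deriveB (is_derive_line diff) (is_deriveZ a (is_derive_id t 1)))
           (is_deriveZ c (is_deriveM (is_derive_id t 1) (is_derive_id t 1)))).
have phi_derive_le0 (t : R) : 0 < t < 1 -> dot (gradh (x + t *: d)) d - a - c * (t + t) <= 0.
  case/andP=> t_gt0 t_lt1; have t01 : 0 <= t <= 1 by rewrite !ltW.
  have := dot_grad_sub_le Ux (segment t t01) (ltW t_gt0).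
  by rewrite (dotBl (gradh (x + t *: d))) /a /c; lra.
have in01 (t : R) : t \in `]0, 1[ -> 0 <= t <= 1.
  by rewrite in_itv /= => /andP[t_gt0 t_lt1]; rewrite !ltW.
have phi_derivable (t : R) : t \in `]0, 1[ -> derivable phi t 1.
  by move=> /in01 /phi_derive[].
have phi'_le0 (t : R) : t \in `]0, 1[ -> (phi^`())%classic t <= 0.
  move=> t01; rewrite derive1E (@derive_val _ _ _ _ _ _ _ (phi_derive t (in01 t t01))).
  rewrite -[a%:A]/(a * 1) -[t%:A]/(t * 1) -[c *: _]/(c * _) !mulr1.
  by apply: phi_derive_le0; rewrite in_itv /= in t01.
have phi_cont : {within `[0, 1], continuous phi}.
  apply: (@derivable_within_continuous _ _ phi `[0, 1]) => t.
  by rewrite in_itv /= => /phi_derive[].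
have := ler0_derive1_le_cc phi_derivable phi'_le0 phi_cont (x := 1) (y := 0).
rewrite !in_itv /= !lexx ler01 => /(_ isT isT isT).
have -> : phi 1 = h (x + 1 *: d) - a * 1 - c * (1 * 1) by [].
have -> : phi 0 = h (x + 0 *: d) - a * 0 - c * (0 * 0) by [].
rewrite scale1r scale0r addr0 /d (addrC x) subrK /a /c -/d.
lra.
Qed.

End Smooth.

Section OperatorNorm.
Variables (R : realType) (m k : nat) (A : 'M[R]_(m, k)).

Lemma opnorm_ubound : has_ubound [set enorm (x *m A) | x in [set x | enorm x <= 1]].
Proof.
exists (Num.sqrt (\sum_(j < k) (\sum_(i < m) `|A i j|) ^+ 2)) => _ [y y_le1 <-].
rewrite ler_sqrt; last by apply: sumr_ge0 => j _; rewrite sqr_ge0.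
apply: ler_sum => j _; rewrite -expr2 -[X in X <= _]real_normK ?num_real //.
rewrite ler_sqr ?nnegrE ?sumr_ge0 // mxE (le_trans (ler_norm_sum _ _ _)) //.
apply: ler_sum => i _; rewrite normrM ler_piMl //.
have := sqr_coord_le_dot y i; rewrite -sqr_enorm -real_normK ?num_real //.
have := enorm_ge0 y; have := normr_ge0 (y ord0 i); move: y_le1 => /= y_le1; nra.
Qed.

Lemma enorm_mulmx_le x : enorm (x *m A) <= opnorm A * enorm x.
Proof.
have [/enorm_eq0 ->|x_neq0] := eqVneq (enorm x) 0.
  by rewrite mul0mx /enorm !dot0l sqrtr0 mulr0.
have x_gt0 : 0 < enorm x by rewrite lt_def x_neq0 enorm_ge0.
have unit_x : enorm ((enorm x)^-1 *: x) <= 1.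
  by rewrite enormZ ger0_norm ?invr_ge0 ?enorm_ge0 // mulVf.
have := ub_le_sup opnorm_ubound (ex_intro2 _ _ ((enorm x)^-1 *: x) unit_x erefl).
by rewrite -scalemxAl enormZ ger0_norm ?invr_ge0 ?enorm_ge0 // mulrC ler_pdivrMr.
Qed.

End OperatorNorm.

Section StepInequalities.
Variables (R : realType) (n s p : nat).

Lemma prox_grad_step_le (x0 x1 u0 c : 'rV[R]_n) (d : R) : 0 < d ->
  let v := u0 - d^-1 *: c in
  dot (x1 - v) (x1 - v) + dot (x0 - x1) (x0 - x1) <= dot (x0 - v) (x0 - v) ->
  d / 2 * dot (x1 - u0) (x1 - u0) + dot c (x1 - x0) + d / 2 * dot (x0 - x1) (x0 - x1)
    <= d / 2 * dot (x0 - u0) (x0 - u0).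
Proof.
move=> d_gt0 v.
have shiftE w : w - v = (w - u0) + d^-1 *: c by apply/rowP => i; rewrite !mxE; ring.
rewrite !shiftE !dot_addZ => three_point.
have d2_ge0 : 0 <= d / 2 by rewrite divr_ge0 // ltW.
have := ler_wpM2l d2_ge0 three_point.
have -> : dot c (x1 - x0) = dot (x1 - u0) c - dot (x0 - u0) c.
  by rewrite dotC -dotBl opprB addrA subrK.
set A1 := dot (x1 - u0) (x1 - u0); set A0 := dot (x0 - u0) (x0 - u0).
set B1 := dot (x1 - u0) c; set B0 := dot (x0 - u0) c.
set C := dot c c; set D := dot (x0 - x1) (x0 - x1).
have -> : d / 2 * (A1 + 2 * d^-1 * B1 + d^-1 ^+ 2 * C + D) =
    d / 2 * A1 + B1 + d^-1 / 2 * C + d / 2 * D by field; rewrite gt_eqF.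
have -> : d / 2 * (A0 + 2 * d^-1 * B0 + d^-1 ^+ 2 * C) = d / 2 * A0 + B0 + d^-1 / 2 * C.
  by field; rewrite gt_eqF.
lra.
Qed.

Lemma relaxation_identity (x1 u0 u1 : 'rV[R]_n) (b : R) : 0 < b ->
  u1 = (1 - b) *: u0 + b *: x1 ->
  dot (x1 - u1) (x1 - u1) = dot (x1 - u0) (x1 - u0) - (2 - b) / b * dot (u0 - u1) (u0 - u1).
Proof.
move=> b_gt0 u1E.
have -> : x1 - u1 = (1 - b) *: (x1 - u0) by rewrite u1E; apply/rowP => i; rewrite !mxE; ring.
have -> : u0 - u1 = (- b) *: (x1 - u0) by rewrite u1E; apply/rowP => i; rewrite !mxE; ring.
by rewrite !dotZl !dotZr; field; rewrite gt_eqF.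
Qed.

Lemma prox_conj_step_le (z0 z1 c0 c1 : 'rV[R]_s) (a0 a1 g : R) : 0 < g ->
  a0 + g / 2 * dot (z0 - g^-1 *: c0) (z0 - g^-1 *: c0) + g / 2 * dot (z1 - z0) (z1 - z0)
    <= a1 + g / 2 * dot (z1 - g^-1 *: c0) (z1 - g^-1 *: c0) ->
  a1 + g / 2 * dot (z1 - g^-1 *: c1) (z1 - g^-1 *: c1) + g / 2 * dot (z0 - z1) (z0 - z1)
    <= a0 + g / 2 * dot (z0 - g^-1 *: c1) (z0 - g^-1 *: c1) ->
  (dot z1 c1 - a1 - g / 2 * dot z1 z1) - (dot z0 c0 - a0 - g / 2 * dot z0 z0)
    <= dot z0 (c1 - c0) + g^-1 * dot (c1 - c0) (c1 - c0) - g / 2 * dot (z0 - z1) (z0 - z1).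
Proof.
move=> g_gt0.
have shiftE z c : g / 2 * dot (z - g^-1 *: c) (z - g^-1 *: c) =
    g / 2 * dot z z - dot z c + g^-1 / 2 * dot c c.
  by rewrite -scaleNr dot_addZ; field; rewrite gt_eqF.
rewrite !shiftE (dot_subC z1 z0) => le0 le1.
have := dot_le_young (z1 - z0) (c1 - c0) g_gt0.
have -> : dot (z1 - z0) (c1 - c0) = dot z1 c1 - dot z1 c0 - dot z0 c1 + dot z0 c0.
  by rewrite !dotBl !dotBr; ring.
rewrite (dot_subC z1 z0) invfM (dotBr c1 c0 z0).
lra.
Qed.

(* The real value of [Psi] at a point where [S x] holds and [gstar z = gz%:E]. *)
Definition Psi_real (A : 'M[R]_(n, s)) (h : 'rV[R]_n -> R)
    (x : 'rV[R]_n) (z : 'rV[R]_s) (u : 'rV[R]_n) (d gam gz : R) : R :=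
  dot z (x *m A) - gz + h x + d / 2 * dot (x - u) (x - u) - gam / 2 * dot z z.

Lemma PsiE (A : 'M[R]_(n, s)) gstar h S x z u (d gam : R) :
  Psi A gstar h S x z u d gam \is a fin_num ->
  S x /\ exists gz, gstar z = gz%:E /\ Psi A gstar h S x z u d gam = (Psi_real A h x z u d gam gz)%:E.
Proof.
rewrite /Psi !fin_numD fin_numN => /andP[/andP[/andP[/andP[/andP[_ gz_fin] _] ind_fin] _] _].
have Sx : S x by move: ind_fin; rewrite /Defs.indic; case: (asboolP (S x)).
split => //; have [gz gzE] := EFin_fin_numP _ gz_fin; exists gz; split => //.
by rewrite gzE /Defs.indic (asboolT Sx) adde0 -!EFinN -!EFinD /Psi_real !sqr_enorm.
Qed.

Lemma Psi_real_descent (A : 'M[R]_(n, s)) (K : 'M[R]_(n, p)) h gradh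
    (x0 x1 u0 u1 : 'rV[R]_n) (z0 z1 : 'rV[R]_s) (y : 'rV[R]_p) (a0 a1 th d gam nu L b nA : R) :
  0 < gam -> 0 < b -> d = 2 * nu + L + 2 * nA ^+ 2 / gam -> u1 = (1 - b) *: u0 + b *: x1 ->
  d / 2 * dot (x1 - u0) (x1 - u0) + dot (gradh x0 + z0 *m A^T - th *: (y *m K^T)) (x1 - x0)
    + d / 2 * dot (x0 - x1) (x0 - x1) <= d / 2 * dot (x0 - u0) (x0 - u0) ->
  h x1 <= h x0 + dot (gradh x0) (x1 - x0) + L / 2 * dot (x1 - x0) (x1 - x0) ->
  (dot z1 (x1 *m A) - a1 - gam / 2 * dot z1 z1) - (dot z0 (x0 *m A) - a0 - gam / 2 * dot z0 z0)
    <= dot z0 (x1 *m A - x0 *m A) + gam^-1 * dot (x1 *m A - x0 *m A) (x1 *m A - x0 *m A)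
       - gam / 2 * dot (z0 - z1) (z0 - z1) ->
  dot ((x1 - x0) *m A) ((x1 - x0) *m A) <= nA ^+ 2 * dot (x1 - x0) (x1 - x0) ->
  Psi_real A h x1 z1 u1 d gam a1
    <= Psi_real A h x0 z0 u0 d gam a0 + th * dot y ((x1 - x0) *m K)
       - (nu * dot (x0 - x1) (x0 - x1) + d * (2 - b) / (2 * b) * dot (u0 - u1) (u0 - u1)
          + gam / 2 * dot (z0 - z1) (z0 - z1)).
Proof.
move=> gam_gt0 b_gt0 dE u1E x_step h_step z_step A_bound.
rewrite (dot_subC x1 x0) in h_step A_bound; rewrite -mulmxBl in z_step.
have cross : dot (gradh x0 + z0 *m A^T - th *: (y *m K^T)) (x1 - x0) =
    dot (gradh x0) (x1 - x0) + dot z0 ((x1 - x0) *m A) - th * dot y ((x1 - x0) *m K).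
  by rewrite dotBl dotDl dotZl -!dot_mulmx.
rewrite cross in x_step.
have gamV_ge0 : 0 <= gam^-1 by rewrite invr_ge0 ltW.
have := ler_wpM2l gamV_ge0 A_bound.
rewrite /Psi_real (relaxation_identity b_gt0 u1E).
have -> : d / 2 * (dot (x1 - u0) (x1 - u0) - (2 - b) / b * dot (u0 - u1) (u0 - u1)) =
    d / 2 * dot (x1 - u0) (x1 - u0) - d * (2 - b) / (2 * b) * dot (u0 - u1) (u0 - u1).
  by field; rewrite gt_eqF.
have : d / 2 * dot (x0 - x1) (x0 - x1) = nu * dot (x0 - x1) (x0 - x1)
    + L / 2 * dot (x0 - x1) (x0 - x1) + gam^-1 * (nA ^+ 2 * dot (x0 - x1) (x0 - x1)).
  by rewrite dE; field; rewrite gt_eqF.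
lra.
Qed.

End StepInequalities.


Lemma fin_num_fine_div_gt0 (R : realType) (a b : \bar R) :
  0 < fine a / fine b -> a \is a fin_num.
Proof. by case: a => //=; rewrite mul0r ltxx. Qed.

Section Descent.
Variables (R : realType) (n s p : nat) (S : set 'rV[R]_n) (A : 'M[R]_(n, s)) (K : 'M[R]_(n, p)).
Variables (g : 'rV[R]_s -> \bar R) (h : 'rV[R]_n -> R) (gradh : 'rV[R]_n -> 'rV[R]_n).
Variables (U : set 'rV[R]_n) (L : R) (f : 'rV[R]_p -> \bar R) (beta nu gamma : R).
Hypotheses (S_neq0 : S !=set0) (S_convex : convex.convex_set S) (S_compact : compact S).
Hypotheses (g_proper : proper_fun g) (f_proper : proper_fun f).
Hypotheses (SU : S `<=` U) (L_ge0 : 0 <= L).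
Hypothesis h_diff : forall x, U x ->
  differentiable h x /\ forall v, 'D_v h x = dot (gradh x) v.
Hypothesis gradh_lip : forall x w, U x -> U w ->
  enorm (gradh x - gradh w) <= L * enorm (x - w).
Hypothesis KS_int : forall x, S x -> interior (dom f) (x *m K).
Hypothesis f_pos : forall x, S x -> (0 < f (x *m K))%E.
Hypotheses (beta_gt0 : 0 < beta) (nu_gt0 : 0 < nu) (gamma_gt0 : 0 < gamma).

Let delta := 2 * nu + L + 2 * opnorm A ^+ 2 / gamma.

Let delta_gt0 : 0 < delta.
Proof.
have : 0 <= 2 * opnorm A ^+ 2 / gamma.
  by apply: divr_ge0; [apply: mulr_ge0 => //; exact: sqr_ge0 | exact: ltW].
by move=> X_ge0; rewrite /delta ltr_wpDr // ltr_wpDr // mulr_gt0.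
Qed.

Lemma f_fin_gt0 x : S x -> exists2 fx, f (x *m K) = fx%:E & 0 < fx.
Proof.
move=> Sx; have := f_pos Sx; have := interior_subset (KS_int Sx).
by rewrite /dom /=; case: (f (x *m K)) => [fx _ fx_gt0| |] //; exists fx.
Qed.

Lemma Psi_descent x0 u0 z0 th0 y x1 u1 z1 a0 a1 :
  S x0 -> fconj g z0 = a0%:E -> fconj g z1 = a1%:E ->
  z0 = prox (fconj g) gamma^-1 (gamma^-1 *: (x0 *m A)) ->
  z1 = prox (fconj g) gamma^-1 (gamma^-1 *: (x1 *m A)) ->
  x1 = Proj S (u0 + (th0 / delta) *: (y *m K^T) - delta^-1 *: gradh x0
               - delta^-1 *: (z0 *m A^T)) ->
  u1 = (1 - beta) *: u0 + beta *: x1 ->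
  Psi_real A h x1 z1 u1 delta gamma a1
    <= Psi_real A h x0 z0 u0 delta gamma a0 + th0 * dot y ((x1 - x0) *m K)
       - (nu * dot (x0 - x1) (x0 - x1) + delta * (2 - beta) / (2 * beta) * dot (u0 - u1) (u0 - u1)
          + gamma / 2 * dot (z0 - z1) (z0 - z1)).
Proof.
move=> Sx0 gz0 gz1 z0E z1E x1E u1E.
set c := gradh x0 + z0 *m A^T - th0 *: (y *m K^T).
have [Sx1 proj_le] := proj_three_point S_neq0 S_compact S_convex (u0 - delta^-1 *: c).
have x1_proj : Proj S (u0 - delta^-1 *: c) = x1.
  rewrite x1E; congr Proj; apply/rowP => i; rewrite !mxE.
  by field; rewrite gt_eqF.
rewrite x1_proj in Sx1 proj_le.
have x_step := prox_grad_step_le delta_gt0 (proj_le _ Sx0).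
have h_step : h x1 <= h x0 + dot (gradh x0) (x1 - x0) + L / 2 * dot (x1 - x0) (x1 - x0).
  apply: (descent_lemma h_diff gradh_lip) => t t01; apply: SU.
  have -> : x0 + t *: (x1 - x0) = t *: x1 + (1 - t) *: x0.
    by apply/rowP => i; rewrite !mxE; ring.
  exact: convex_set_segment.
have z_step : (dot z1 (x1 *m A) - a1 - gamma / 2 * dot z1 z1)
    - (dot z0 (x0 *m A) - a0 - gamma / 2 * dot z0 z0)
    <= dot z0 (x1 *m A - x0 *m A) + gamma^-1 * dot (x1 *m A - x0 *m A) (x1 *m A - x0 *m A)
       - gamma / 2 * dot (z0 - z1) (z0 - z1).
  apply: prox_conj_step_le => //.
    have := prox_fconj_three_point g_proper (c := gamma^-1 *: (x0 *m A)) (w := z1) gamma_gt0.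
    by rewrite /= -z0E => /(_ _ _ gz0 gz1).
  have := prox_fconj_three_point g_proper (c := gamma^-1 *: (x1 *m A)) (w := z0) gamma_gt0.
  by rewrite /= -z1E => /(_ _ _ gz1 gz0).
have A_bound : dot ((x1 - x0) *m A) ((x1 - x0) *m A)
    <= opnorm A ^+ 2 * dot (x1 - x0) (x1 - x0).
  rewrite -!sqr_enorm -exprMn ler_sqr ?nnegrE ?enorm_ge0 ?enorm_mulmx_le //.
  exact: le_trans (enorm_ge0 _) (enorm_mulmx_le A (x1 - x0)).
exact: (Psi_real_descent gamma_gt0 beta_gt0 erefl u1E x_step h_step z_step A_bound).
Qed.

Lemma descent_step x0 u0 z0 th0 y x1 u1 z1 :
  th0 = fine (Psi A (fconj g) h S x0 z0 u0 delta gamma) / fine (f (x0 *m K)) -> 0 < th0 ->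
  Psi A (fconj g) h S x1 z1 u1 delta gamma \is a fin_num ->
  z0 = prox (fconj g) gamma^-1 (gamma^-1 *: (x0 *m A)) ->
  z1 = prox (fconj g) gamma^-1 (gamma^-1 *: (x1 *m A)) ->
  subdiff f (x0 *m K) y ->
  x1 = Proj S (u0 + (th0 / delta) *: (y *m K^T) - delta^-1 *: gradh x0
               - delta^-1 *: (z0 *m A^T)) ->
  u1 = (1 - beta) *: u0 + beta *: x1 ->
  let D := nu * enorm (x0 - x1) ^+ 2 + delta * (2 - beta) / (2 * beta) * enorm (u0 - u1) ^+ 2
           + gamma / 2 * enorm (z0 - z1) ^+ 2 in
  (Psi A (fconj g) h S x1 z1 u1 delta gamma + th0%:E * f (x0 *m K)
     - th0%:E * ((dot (x1 *m K) y)%:E - fconj f y)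
   <= Psi A (fconj g) h S x0 z0 u0 delta gamma - D%:E)%E
  /\ (Psi A (fconj g) h S x1 z1 u1 delta gamma - th0%:E * f (x1 *m K) <= - D%:E)%E.
Proof.
move=> th0E th0_gt0 Psi1_fin z0E z1E y_sub x1E u1E D.
have Psi0_fin : Psi A (fconj g) h S x0 z0 u0 delta gamma \is a fin_num.
  by apply: (@fin_num_fine_div_gt0 _ _ (f (x0 *m K))); rewrite -th0E.
have [Sx0 [a0 [gz0 Psi0E]]] := PsiE Psi0_fin.
have [Sx1 [a1 [gz1 Psi1E]]] := PsiE Psi1_fin.
have [fx0 fx0E fx0_gt0] := f_fin_gt0 Sx0; have [fx1 fx1E _] := f_fin_gt0 Sx1.
have descent := Psi_descent Sx0 gz0 gz1 z0E z1E x1E u1E.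
have Psi0_th0 : Psi_real A h x0 z0 u0 delta gamma a0 = th0 * fx0.
  by rewrite th0E Psi0E fx0E /= divfK // gt_eqF.
have conjE := fconj_subdiff f_proper.2 y_sub; rewrite fx0E in conjE.
have subgrad : fx0 + dot y (x1 *m K - x0 *m K) <= fx1.
  by case: y_sub => _ /(_ (x1 *m K)); rewrite fx0E fx1E -EFinD lee_fin.
have := ler_wpM2l (ltW th0_gt0) subgrad.
rewrite Psi0E Psi1E conjE fx0E fx1E /D !sqr_enorm -EFinB.
do 3 rewrite -?EFinM -?EFinB -?EFinN -?EFinD.
rewrite !lee_fin (dotC (x1 *m K)) (dotC (x0 *m K)).
rewrite mulmxBl (dotBr (x1 *m K) (x0 *m K) y) in descent *.
by split; nra.
Qed.

End Descent.

Section Algorithm.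
Variables (R : realType) (n s p : nat) (S : set 'rV[R]_n) (A : 'M[R]_(n, s)) (K : 'M[R]_(n, p)).
Variables (g : 'rV[R]_s -> \bar R) (h : 'rV[R]_n -> R) (gradh : 'rV[R]_n -> 'rV[R]_n).
Variables (L : R) (f : 'rV[R]_p -> \bar R) (beta nu q delta0 theta0 eps : R).
Variables (x u : nat -> 'rV[R]_n) (z : nat -> 'rV[R]_s) (y : nat -> 'rV[R]_p).
Variables (gam del th : nat -> R).
Hypothesis run :
  alg_run S A K g h gradh L f beta nu q delta0 theta0 eps x u z y gam del th.
Hypothesis q01 : 0 < q < 1.

(* The accepted [gamma_(k+1)] is [gamma_k q^j] or [gamma_k q^(j+1)] with [q < 1],
   so it equals [gamma_k] only if the first trial [j = 0] was accepted. *)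
Lemma alg_run_stable_gamma k gamma : 0 < gamma -> gam k = gamma -> gam k.+1 = gamma ->
  [/\ z k.+1 = prox (fconj g) gamma^-1 (gamma^-1 *: (x k.+1 *m A)),
      th k.+1 = fine (Psi A (fconj g) h S (x k.+1) (z k.+1) (u k.+1) (del k) gamma)
                / fine (f (x k.+1 *m K))
    & 0 < th k.+1].
Proof.
move=> gamma_gt0 gamk gamk1.
case: run => _ _ _ /(_ k) [_ _ _ [j [_ th_gt0 [zE thE] gamE _]]].
have [q_gt0 q_lt1] := andP q01.
have pow_eq1 i : gamma * q ^+ i = gamma -> i = 0%N.
  rewrite -[X in _ = X]mulr1 => /(mulfI (lt0r_neq0 gamma_gt0)) qi1.
  by have := exprn_ilt1 i (ltW q_gt0) q_lt1; rewrite qi1 ltxx => /esym/negbFE/eqP.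
have j0 : j = 0%N.
  move: gamE; rewrite gamk gamk1; case: ifP => _ gamE; last exact: pow_eq1.
  by have := pow_eq1 j.+1; rewrite exprSr mulrA -gamE => /(_ erefl).
split; [by rewrite zE j0 gamk expr0 mulr1 | by rewrite thE -zE j0 gamk expr0 mulr1 |].
by rewrite thE.
Qed.

End Algorithm.

Unset Implicit Arguments.

Theorem theorem5p2 (R : realType) (n s p : nat)
  (S : set 'rV[R]_n) (A : 'M[R]_(n, s)) (K : 'M[R]_(n, p))
  (g : 'rV[R]_s -> \bar R) (h : 'rV[R]_n -> R) (gradh : 'rV[R]_n -> 'rV[R]_n)
  (U : set 'rV[R]_n) (L : R) (f : 'rV[R]_p -> \bar R) (ell : R)
  (* S nonempty, convex, compact *)
  (HS0 : S !=set0) (HSconv : convex.convex_set S) (HScpt : compact S)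
  (* g proper convex lsc *)
  (Hgp : proper_fun g) (Hgc : convex_fun g) (Hgl : lower_semicontinuous g)
  (* h differentiable on an open set U containing S, with L-Lipschitz gradient there *)
  (HUo : open U) (HSU : S `<=` U)
  (Hhd : forall x, U x -> differentiable h x /\ forall v, 'D_v h x = dot (gradh x) v)
  (HL0 : 0 <= L)
  (HLip : forall x w, U x -> U w -> enorm (gradh x - gradh w) <= L * enorm (x - w))
  (* f proper convex lsc, K(S) in int dom f, f(Kx) > 0 on S *)
  (Hfp : proper_fun f) (Hfc : convex_fun f) (Hfl : lower_semicontinuous f)
  (HKS : forall x, S x -> (interior (dom f)) (x *m K))
  (Hfpos : forall x, S x -> (0 < f (x *m K))%E)
  (* domain / infimum conditions *)
  (Hdomg : exists2 x, S x & dom g (x *m A))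
  (Hinf : (0 < ereal_inf [set g (x *m A) + (h x)%:E | x in S])%E)
  (Hsub : forall x, S x -> exists w, subdiff g (x *m A) w)
  (Hell : 0 < ell)
  (Hdist : forall x, S x -> dist0 [set w | subdiff g (x *m A) w] <= ell)
  (* parameters *)
  (beta nu q delta0 theta0 eps : R)
  (Hbeta : 0 < beta < 2) (Hnu : 0 < nu) (Hq : 0 < q < 1)
  (Hdelta0 : 0 < delta0) (Htheta0 : 0 < theta0) (Heps : 0 < eps)
  (* iterates generated by the algorithm *)
  (x u : nat -> 'rV[R]_n) (z : nat -> 'rV[R]_s) (y : nat -> 'rV[R]_p)
  (gam del th : nat -> R)
  (Hrun : alg_run S A K g h gradh L f beta nu q delta0 theta0 eps x u z y gam del th)
  (* eventual stabilization *)
  (gamma : R) (K0 : nat) (Hgamma : 0 < gamma)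
  (Hstab : forall k, (K0 <= k)%N ->
     [/\ gam k = gamma,
         del k = 2 * nu + L + 2 * opnorm A ^+ 2 / gamma &
         enorm (z k.+1) <= Num.min (eps / gamma) (Num.sqrt (2 * eps / gamma))]) :
  let delta := 2 * nu + L + 2 * opnorm A ^+ 2 / gamma in
  let c1 := nu in
  let c2 := delta * (2 - beta) / (2 * beta) in
  let c3 := gamma / 2 in
  let PSI k := Psi A (fconj g) h S (x k) (z k) (u k) delta gamma in
  let D k := c1 * enorm (x k - x k.+1) ^+ 2 + c2 * enorm (u k - u k.+1) ^+ 2
             + c3 * enorm (z k - z k.+1) ^+ 2 in
  forall k, (K0.+1 <= k)%N ->
    (PSI k.+1 + (th k)%:E * f (x k *m K)
       - (th k)%:E * ((dot (x k.+1 *m K) (y k.+1))%:E - fconj f (y k.+1))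
     <= PSI k - (D k)%:E)%E
    /\ (PSI k.+1 - (th k)%:E * f (x k.+1 *m K) <= - (D k)%:E)%E.
Proof.
move=> delta c1 c2 c3 PSI D [//|k] K0_le_k.
have [beta_gt0 _] := andP Hbeta.
have [gam_k del_k _] := Hstab k K0_le_k.
have [gam_k1 del_k1 _] := Hstab k.+1 (leqW K0_le_k).
have [gam_k2 _ _] := Hstab k.+2 (leqW (leqW K0_le_k)).
have [z1E th1E th1_gt0] := alg_run_stable_gamma Hrun Hq Hgamma gam_k gam_k1.
have [z2E th2E th2_gt0] := alg_run_stable_gamma Hrun Hq Hgamma gam_k1 gam_k2.
have Psi2_fin : PSI k.+2 \is a fin_num.
  apply: (@fin_num_fine_div_gt0 _ _ (f (x k.+2 *m K))).
  by rewrite del_k1 -/delta in th2E; rewrite -th2E.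
case: Hrun => _ _ _ /(_ k.+1) [y_sub x2E u2E _].
rewrite del_k in th1E; rewrite del_k1 in x2E.
exact: (descent_step HS0 HSconv HScpt Hgp Hfp HSU HL0 Hhd HLip HKS Hfpos beta_gt0 Hnu Hgamma
          th1E th1_gt0 Psi2_fin z1E z2E y_sub x2E u2E).
Qed.
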